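(* Let $\langle A,\preccurlyeq\rangle$ be a pre-ordered set and let $x\in LO(A,\preccurlyeq)$. The following are equivalent: (i) $x$ is minimal, i.e. there is no $y\in LO(A,\preccurlyeq)$ with $y\subsetneq x$; (ii) for every $a\in x$, $x=pr(a)$; (iii) for every $a\in x$, $x=[a]$.
   Context: A pre-ordering $\preccurlyeq$ on $A$ is a reflexive and transitive binary relation. For $a\in A$, $pr(a)=\{b\in A: b\preccurlyeq a\}$. $LO(A,\preccurlyeq)$ is the set of all nonempty subsets $x\subseteq A$ such that $pr(a)\subseteq x$ for every $a\in x$ (nonempty open sets of the lower topology). Write $a\sim b$ iff $a\preccurlyeq b$ and $b\preccurlyeq a$; this is an equivalence relation and $[a]$ denotes the $\sim$-equivalence class of $a$. *)

From Stdlib Require Import RelationClasses.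

Definition preorder {A : Type} (le : A -> A -> Prop) : Prop :=
  (forall a, le a a) /\ (forall a b c, le a b -> le b c -> le a c).

Definition subset {A : Type} (x y : A -> Prop) : Prop := forall a, x a -> y a.

Definition set_eq {A : Type} (x y : A -> Prop) : Prop := forall a, x a <-> y a.

Definition proper_subset {A : Type} (y x : A -> Prop) : Prop :=
  subset y x /\ ~ set_eq y x.

Definition pr {A : Type} (le : A -> A -> Prop) (a : A) : A -> Prop :=
  fun b => le b a.

Definition LO {A : Type} (le : A -> A -> Prop) (x : A -> Prop) : Prop :=
  (exists a, x a) /\ (forall a, x a -> subset (pr le a) x).

Definition equiv_class {A : Type} (le : A -> A -> Prop) (a : A) : A -> Prop :=
  fun b => le b a /\ le a b.

(* A down-set [pr a] of a point of [x] is itself in LO and lies inside [x], so a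
   minimal [x] equals each of them.  Conversely, if [x = pr a] for all [a] in [x],
   every LO subset [y] of [x] contains some [b], hence [pr b = x].  Finally
   [x = pr a] for all [a] in [x] says exactly that all points of [x] are
   [≼]-below each other, i.e. that [x] is a single [~]-class. *)
From Stdlib Require Import Classical.

Definition minimal_LO {A : Type} (le : A -> A -> Prop) (x : A -> Prop) : Prop :=
  ~ exists y, LO le y /\ proper_subset y x.

Section LowerOpenSets.

Variable A : Type.
Variable le : A -> A -> Prop.

Lemma pr_LO : preorder le -> forall a, LO le (pr le a).
Proof.
  intros [le_refl le_trans] a. split.
  - exists a. apply le_refl.
  - intros b Hba c Hcb. exact (le_trans c b a Hcb Hba).
Qed.

Lemma LO_pr_subset (x : A -> Prop) a : LO le x -> x a -> subset (pr le a) x.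
Proof. intros [_ Hdown] Ha. exact (Hdown a Ha). Qed.

Lemma minimal_LO_eq_pr (x : A -> Prop) :
  preorder le -> LO le x -> minimal_LO le x ->
  forall a, x a -> set_eq x (pr le a).
Proof.
  intros Hpre Hx Hmin a Ha.
  apply NNPP. intros Hneq. apply Hmin.
  exists (pr le a). split; [apply pr_LO, Hpre |].
  split.
  - exact (LO_pr_subset x a Hx Ha).
  - intros Heq. apply Hneq. intros b. specialize (Heq b). tauto.
Qed.

Lemma eq_pr_minimal_LO (x : A -> Prop) :
  (forall a, x a -> set_eq x (pr le a)) -> minimal_LO le x.
Proof.
  intros Hx_pr [y [[[b Hb] Hy_down] [Hyx Hneq]]].
  apply Hneq. intros c. split.
  - apply Hyx.
  - intros Hc. apply (Hy_down b Hb). apply (Hx_pr b (Hyx b Hb)). exact Hc.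
Qed.

Lemma eq_pr_eq_equiv_class (x : A -> Prop) :
  (forall a, x a -> set_eq x (pr le a)) ->
  forall a, x a -> set_eq x (equiv_class le a).
Proof.
  intros Hx_pr a Ha b. split.
  - intros Hb. split.
    + exact (proj1 (Hx_pr a Ha b) Hb).
    + exact (proj1 (Hx_pr b Hb a) Ha).
  - intros [Hba _]. exact (proj2 (Hx_pr a Ha b) Hba).
Qed.

Lemma eq_equiv_class_eq_pr (x : A -> Prop) :
  LO le x -> (forall a, x a -> set_eq x (equiv_class le a)) ->
  forall a, x a -> set_eq x (pr le a).
Proof.
  intros Hx Hx_class a Ha b. split.
  - intros Hb. exact (proj1 (proj1 (Hx_class a Ha b) Hb)).
  - exact (LO_pr_subset x a Hx Ha b).
Qed.

End LowerOpenSets.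

Theorem lemma2p2 (A : Type) (le : A -> A -> Prop) (Hpre : preorder le)
  (x : A -> Prop) (Hx : LO le x) :
  ((~ exists y, LO le y /\ proper_subset y x) <->
     (forall a, x a -> set_eq x (pr le a))) /\
  ((forall a, x a -> set_eq x (pr le a)) <->
     (forall a, x a -> set_eq x (equiv_class le a))).
Proof.
  split; split.
  - exact (minimal_LO_eq_pr A le x Hpre Hx).
  - exact (eq_pr_minimal_LO A le x).
  - exact (eq_pr_eq_equiv_class A le x).
  - exact (eq_equiv_class_eq_pr A le x Hx).
Qed.
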